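(* For every instance of the single-processor carbon-aware scheduling problem that admits a valid schedule, there exists an optimal valid schedule in which, for every $u\in\{1,\dots,n\}$, the completion time $\sigma(v_u)+\omega(v_u)$ belongs to the set $$\mathcal{E}'=\Big\{x+\sum_{i=r}^{u}\omega(v_i)\;:\;x\in\mathcal{E},\,1\le r\le u\le n\Big\}\cup\Big\{x-\sum_{i=u+1}^{s}\omega(v_i)\;:\;x\in\mathcal{E},\,1\le u\le s\le n\Big\},$$ where $\mathcal{E}=\{b_1,e_1,\dots,e_J\}$; in particular $|\mathcal{E}'|=O(n^3J)$ (indeed $O(n^2 J)$ candidate values per task).
   Context: Single-processor carbon-aware scheduling problem. All quantities are nonnegative integers. One processor must execute tasks $v_1,\dots,v_n$ in this fixed order; task $v_i$ has duration $\omega(v_i)\ge 1$. The horizon $[0,T)$ is partitioned into $J$ consecutive intervals $I_j=[b_j,e_j)$, $1\le j\le J$, with $b_1=0$, $e_j=b_{j+1}$, $e_J=T$, each with a constant green power budget $\mathcal{G}_j\ge 0$ per time unit. The processor consumes idle power $P_{\mathrm{idle}}$ at every time unit, plus working power $P_{\mathrm{work}}$ at every time unit during which it executes a task. A (valid) schedule is an assignment of integer start times $\sigma(v_i)$ with $\sigma(v_1)\ge 0$, $\sigma(v_{i+1})\ge \sigma(v_i)+\omega(v_i)$ for $1\le i<n$, and $\sigma(v_n)+\omega(v_n)\le T$. The processor is active at integer time $t$ iff $\sigma(v_i)\le t<\sigma(v_i)+\omega(v_i)$ for some $i$; the power at $t$ is $\mathcal{P}(t)=P_{\mathrm{idle}}+P_{\mathrm{work}}$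 if active and $P_{\mathrm{idle}}$ otherwise. The total carbon cost is $\mathcal{CC}=\sum_{t=0}^{T-1}\max(\mathcal{P}(t)-\mathcal{G}_{j(t)},0)$, where $t\in I_{j(t)}$; a schedule is optimal if it is valid and has minimum carbon cost. *)

From mathcomp Require Import all_boot.
Set Implicit Arguments. Unset Strict Implicit. Unset Printing Implicit Defensive.

(* An instance:
   - n tasks v_1..v_n with durations w 1, ..., w n (values of w outside 1..n ignored);
   - J intervals I_j = [e (j-1), e j), 1 <= j <= J, with e 0 = b_1 = 0 and T = e J;
   - green budgets G 1, ..., G J; idle/working powers Pidle, Pwork. *)

Definition wf_instance (n : nat) (w : nat -> nat) (J : nat) (e : nat -> nat) : Prop :=
  (forall i, 1 <= i <= n -> 1 <= w i) /\
  e 0 = 0 /\ (forall j, 1 <= j <= J -> e j.-1 < e j).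

Definition horizon (J : nat) (e : nat -> nat) : nat := e J.

Definition valid_schedule (n : nat) (w : nat -> nat) (J : nat) (e : nat -> nat)
    (sigma : nat -> nat) : Prop :=
  (forall i, 1 <= i < n -> sigma i + w i <= sigma i.+1) /\
  (0 < n -> sigma n + w n <= horizon J e).

Definition active (n : nat) (w : nat -> nat) (sigma : nat -> nat) (t : nat) : bool :=
  has (fun i => (sigma i <= t) && (t < sigma i + w i)) (iota 1 n).

(* green budget G_{j(t)} of the interval containing t (intervals are disjoint) *)
Definition green (J : nat) (e : nat -> nat) (G : nat -> nat) (t : nat) : nat :=
  \sum_(1 <= j < J.+1 | (e j.-1 <= t) && (t < e j)) G j.

Definition power (n : nat) (w : nat -> nat) (Pidle Pwork : nat) (sigma : nat -> nat)
    (t : nat) : nat :=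
  Pidle + (if active n w sigma t then Pwork else 0).

(* carbon cost: sum over t of max(P(t) - G_{j(t)}, 0) (truncated subtraction) *)
Definition carbon_cost (n : nat) (w : nat -> nat) (J : nat) (e : nat -> nat)
    (G : nat -> nat) (Pidle Pwork : nat) (sigma : nat -> nat) : nat :=
  \sum_(0 <= t < horizon J e) (power n w Pidle Pwork sigma t - green J e G t).

Definition optimal_schedule (n : nat) (w : nat -> nat) (J : nat) (e : nat -> nat)
    (G : nat -> nat) (Pidle Pwork : nat) (sigma : nat -> nat) : Prop :=
  valid_schedule n w J e sigma /\
  forall sigma', valid_schedule n w J e sigma' ->
    carbon_cost n w J e G Pidle Pwork sigma <= carbon_cost n w J e G Pidle Pwork sigma'.

Definition in_E (J : nat) (e : nat -> nat) (x : nat) : Prop :=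
  x = 0 \/ exists j, 1 <= j <= J /\ x = e j.

Definition in_E' (n : nat) (w : nat -> nat) (J : nat) (e : nat -> nat) (u c : nat) : Prop :=
  (exists x r, in_E J e x /\ 1 <= r <= u /\ u <= n /\
     c = x + \sum_(r <= i < u.+1) w i) \/
  (exists x s, in_E J e x /\ 1 <= u <= s /\ s <= n /\
     c + \sum_(u.+1 <= i < s.+1) w i = x).

From mathcomp Require Import all_boot zify.
From Stdlib Require Import Classical.

Set Implicit Arguments.
Unset Strict Implicit.
Unset Printing Implicit Defensive.

(* Among the optimal schedules pick one minimising the sum of the start times,
   and let [r, s] be the maximal block of back-to-back tasks containing u.  If
   neither the start a of the block nor its end b lies in E, then the green
   budget at a - 1 equals that at a, and the one at b - 1 equals that at b.
   Moving the block one unit to the left therefore changes the cost by exactly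
   the opposite of moving it one unit to the right; both moves are feasible, so
   optimality forces both changes to vanish, and the left move yields an optimal
   schedule with a smaller sum of start times.  Hence a or b lies in E, and the
   completion time of u is a plus, or b minus, a sum of consecutive durations. *)

Lemma ex_argmin (A : Type) (m : A -> nat) (P : A -> Prop) :
  (exists x, P x) -> exists x, P x /\ forall y, P y -> m x <= m y.
Proof.
move=> [x0 P0].
suff min_below k x : P x -> m x <= k -> exists x, P x /\ forall y, P y -> m x <= m y.
  exact: (min_below _ x0 P0 (leqnn _)).
elim: k x => [|k IH] x Px mx_k.
  by exists x; split=> // y _; lia.
case: (classic (exists y, P y /\ m y < m x)) => [[y [Py lt_yx]]|no_smaller].
  by apply: (IH y Py); lia.
exists x; split=> // y Py; rewrite leqNgt; apply/negP => lt_yx; apply: no_smaller.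
by exists y.
Qed.

Lemma big_nat_update2 (f g : nat -> nat) p q T :
  p != q -> p < T -> q < T -> (forall t, t != p -> t != q -> g t = f t) ->
  \sum_(0 <= t < T) g t + f p + f q = \sum_(0 <= t < T) f t + g p + g q.
Proof.
move=> pq pT qT gf.
have split2 h : \sum_(0 <= t < T) h t =
    h p + h q + \sum_(t < T | (t != Ordinal pT) && (t != Ordinal qT)) h t.
  rewrite big_mkord (bigD1 (Ordinal pT)) // (bigD1 (Ordinal qT)) /= ?addnA //.
  by rewrite -val_eqE /= eq_sym.
rewrite !split2 (eq_bigr (fun t : 'I_T => f t)) => [|t /andP[tp tq]].
  by move: (\sum_(_ < _ | _) _) => S; lia.
by apply: gf; [move: tp | move: tq]; rewrite -val_eqE.
Qed.

Lemma ltn_sum_nat (F G : nat -> nat) m n k : m <= k < n ->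
  (forall i, m <= i < n -> F i <= G i) -> F k < G k ->
  \sum_(m <= i < n) F i < \sum_(m <= i < n) G i.
Proof.
move=> k_mn le_FG lt_k.
rewrite !(@big_cat_nat _ _ _ k m n) ?(@big_ltn _ _ _ k n) /=; try lia.
have le_lo : \sum_(m <= i < k) F i <= \sum_(m <= i < k) G i.
  rewrite big_nat_cond [X in _ <= X]big_nat_cond.
  by apply: leq_sum => i /andP[i_k _]; apply: le_FG; lia.
have le_hi : \sum_(k.+1 <= i < n) F i <= \sum_(k.+1 <= i < n) G i.
  rewrite big_nat_cond [X in _ <= X]big_nat_cond.
  by apply: leq_sum => i /andP[i_k _]; apply: le_FG; lia.
lia.
Qed.

Lemma run_start (P : pred nat) lo u : lo <= u ->
  exists2 r, lo <= r <= u & (forall i, r <= i < u -> P i) /\ (r = lo \/ ~~ P r.-1).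
Proof.
elim: u => [|u IH] lo_u.
  by exists lo; first lia; split; [move=> i; lia | left].
have [->|lo_le_u] : lo = u.+1 \/ lo <= u by lia.
  by exists u.+1; first lia; split; [move=> i; lia | left].
have [r r_u [run_r r_lo]] := IH lo_le_u.
case Pu: (P u); last by exists u.+1; first lia; split; [move=> i; lia | right; rewrite Pu].
exists r; first lia; split=> // i Hi.
by case: (eqVneq i u) => [->//|ne]; apply: run_r; lia.
Qed.

Lemma run_end (P : pred nat) u hi : u <= hi ->
  exists2 s, u <= s <= hi & (forall i, u <= i < s -> P i) /\ (s = hi \/ ~~ P s).
Proof.
elim: hi => [|hi IH] u_hi.
  by exists u; first lia; split; [move=> i; lia | left; lia].
have [->|u_le_hi] : u = hi.+1 \/ u <= hi by lia.
  by exists hi.+1; first lia; split; [move=> i; lia | left].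
have [s s_hi [run_s [s_eq|notPs]]] := IH u_le_hi; last by exists s; first lia; split=> //; right.
subst s; case Phi: (P hi); last by exists hi; first lia; split=> //; right; rewrite Phi.
exists hi.+1; first lia; split; last by left.
by move=> i Hi; case: (eqVneq i hi) => [->//|ne]; apply: run_s; lia.
Qed.

Section Precedence.
Variables (n : nat) (w sigma : nat -> nat).
Hypothesis prec : forall i, 1 <= i < n -> sigma i + w i <= sigma i.+1.

Lemma completion_le_start i j : 1 <= i < j -> j <= n -> sigma i + w i <= sigma j.
Proof.
elim: j => [|j IH] ij jn; first lia.
case: (eqVneq i j) => [eq_ij|ne_ij]; first by subst j; apply: prec; lia.
by have := IH ltac:(lia) ltac:(lia); have := @prec j ltac:(lia); lia.
Qed.

Lemma start_mono i j : 1 <= i <= j -> j <= n -> sigma i <= sigma j.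
Proof.
move=> ij jn; case: (eqVneq i j) => [->//|ne_ij].
by have := completion_le_start (i:=i) (j:=j) ltac:(lia) jn; lia.
Qed.

Lemma completion_mono i j : 1 <= i <= j -> j <= n -> sigma i + w i <= sigma j + w j.
Proof.
move=> ij jn; case: (eqVneq i j) => [->//|ne_ij].
by have := completion_le_start (i:=i) (j:=j) ltac:(lia) jn; lia.
Qed.

End Precedence.

Lemma completion_le_horizon n w J e sigma : valid_schedule n w J e sigma ->
  forall i, 1 <= i <= n -> sigma i + w i <= horizon J e.
Proof.
move=> [prec last_end] i i_n; have := last_end ltac:(lia).
by have := completion_mono prec (i:=i) (j:=n) ltac:(lia) (leqnn _); lia.
Qed.

Lemma activeP n w sigma t :
  reflect (exists i, 1 <= i <= n /\ sigma i <= t < sigma i + w i) (active n w sigma t).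
Proof.
apply: (iffP hasP) => [[i i_n t_i]|[i [i_n t_i]]].
  by exists i; split=> //; move: i_n; rewrite mem_iota; lia.
by exists i => //; rewrite mem_iota; lia.
Qed.

Definition tight (w sigma : nat -> nat) (r s : nat) : Prop :=
  forall i, r <= i < s -> sigma i + w i = sigma i.+1.

Lemma completion_of_tight w sigma r s : r <= s -> tight w sigma r s ->
  sigma s + w s = sigma r + \sum_(r <= i < s.+1) w i.
Proof.
elim: s => [|s IH] r_s rs_tight.
  have -> : r = 0 by lia.
  by rewrite big_nat1.
case: (eqVneq r s.+1) => [->|ne]; first by rewrite big_nat1.
rewrite big_nat_recr /=; last lia.
rewrite -rs_tight; last lia.
by rewrite IH; [lia | lia | move=> i Hi; apply: rs_tight; lia].
Qed.

Lemma maximal_tight_block n w sigma u :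
  (forall i, 1 <= i < n -> sigma i + w i <= sigma i.+1) -> 1 <= u <= n ->
  exists r s, [/\ 1 <= r <= u, u <= s <= n, tight w sigma r s,
    r = 1 \/ sigma r.-1 + w r.-1 < sigma r & s = n \/ sigma s + w s < sigma s.+1].
Proof.
move=> prec u_n; pose link i := sigma i + w i == sigma i.+1.
have [r r_u [run_r gap_r]] := run_start link (lo := 1) (u := u) ltac:(lia).
have [s u_s [run_s gap_s]] := run_end link (u := u) (hi := n) ltac:(lia).
exists r, s; split=> //.
- by move=> i i_rs; apply/eqP; case: (ltnP i u) => ?; [apply: run_r | apply: run_s]; lia.
- case: (eqVneq r 1) => [|r_ne1]; [by left | right].
  case: gap_r => [//|/eqP]; have := prec r.-1 ltac:(lia); rewrite prednK; lia.
- case: (eqVneq s n) => [|s_ne_n]; [by left | right].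
  by case: gap_s => [//|/eqP]; have := prec s ltac:(lia); lia.
Qed.

Lemma green_pred J e G a : e 0 = 0 -> ~ in_E J e a ->
  green J e G (a - 1) = green J e G a.
Proof.
move=> e0 a_E; have a_pos : 0 < a by case: (posnP a) => // a0; case: a_E; left.
have not_bound k : k <= J -> e k <> a.
  move=> k_J e_k; apply: a_E; case: (posnP k) => [k0|k_pos].
    by left; rewrite -e_k k0 e0.
  by right; exists k; split; [lia | rewrite e_k].
rewrite /green !(big_mkcond (fun j => _ && _)); apply: eq_big_nat => j j_J.
have := not_bound j.-1 ltac:(lia); have := not_bound j ltac:(lia).
by case: ifP; case: ifP; lia.
Qed.

(* [carbon_cost] unfolds to the sum over t of [slot_cost t (active t)]. *)
Definition slot_cost (J : nat) (e G : nat -> nat) (Pidle Pwork t : nat) (b : bool) : nat :=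
  Pidle + (if b then Pwork else 0) - green J e G t.

Lemma slot_cost_pred J e G Pidle Pwork a b : e 0 = 0 -> ~ in_E J e a ->
  slot_cost J e G Pidle Pwork (a - 1) b = slot_cost J e G Pidle Pwork a b.
Proof. by move=> e0 a_E; rewrite /slot_cost green_pred. Qed.

Lemma lt_horizon_of_notin_E J e x : e 0 = 0 -> x <= horizon J e -> ~ in_E J e x ->
  x < horizon J e.
Proof.
rewrite /horizon => e0 x_T x_E; rewrite ltn_neqAle x_T andbT; apply/eqP => x_eq; apply: x_E.
case: (posnP J) => [J0|J_pos]; first by left; rewrite x_eq J0.
by right; exists J; split; [lia | ].
Qed.

Definition start_sum (n : nat) (sigma : nat -> nat) : nat := \sum_(1 <= i < n.+1) sigma i.

Definition delay_block (r s : nat) (sigma : nat -> nat) (i : nat) : nat :=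
  if r <= i <= s then sigma i + 1 else sigma i.

Definition advance_block (r s : nat) (sigma : nat -> nat) (i : nat) : nat :=
  if r <= i <= s then sigma i - 1 else sigma i.

Lemma delay_advance_block r s sigma i : (r <= i <= s -> 0 < sigma i) ->
  sigma i = delay_block r s (advance_block r s sigma) i.
Proof.
rewrite /delay_block /advance_block.
by case: (r <= i <= s) => // /(_ isT); lia.
Qed.

Section BlockDelay.
Variables (n : nat) (w tau sigma : nat -> nat) (r s : nat).
Hypotheses (r_s : 1 <= r <= s) (s_n : s <= n).
Hypothesis delayed : forall i, 1 <= i <= n -> sigma i = delay_block r s tau i.

Lemma delayed_in i : r <= i <= s -> sigma i = tau i + 1.
Proof. by move=> i_rs; rewrite delayed /delay_block ?i_rs //; lia. Qed.

Lemma delayed_out i : 1 <= i <= n -> ~~ (r <= i <= s) -> sigma i = tau i.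
Proof. by move=> i_n /negbTE i_rs; rewrite delayed // /delay_block i_rs. Qed.

Lemma tight_undelay : tight w sigma r s -> tight w tau r s.
Proof. by move=> tight_sigma i i_rs; have := tight_sigma i i_rs; rewrite !delayed_in; lia. Qed.

Lemma start_sum_undelay : start_sum n tau < start_sum n sigma.
Proof.
apply: (ltn_sum_nat (k := r)); first lia; last by rewrite delayed_in; lia.
move=> i i_n; rewrite delayed; last lia.
by rewrite /delay_block; case: ifP; lia.
Qed.

Lemma valid_delay J e : valid_schedule n w J e tau ->
  (s = n \/ tau s + w s < tau s.+1) -> (s = n -> tau s + w s < horizon J e) ->
  valid_schedule n w J e sigma.
Proof.
move=> [prec last_end] gap room; split=> [i i_n | n_pos].
  have gap_i : i = s -> tau i + w i < tau i.+1 by move=> i_s; subst i; case: gap; lia.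
  have := prec i i_n; rewrite !delayed /delay_block; try lia.
  by case: ifP; case: ifP; lia.
have := last_end n_pos; rewrite delayed /delay_block; last lia.
case: ifP => // n_rs; have s_eq : s = n by lia.
by subst s; have := room erefl; lia.
Qed.

Lemma valid_undelay J e : valid_schedule n w J e sigma ->
  (r = 1 \/ sigma r.-1 + w r.-1 < sigma r) -> valid_schedule n w J e tau.
Proof.
move=> [prec last_end] gap; split=> [i i_n | n_pos].
  have gap_i : i.+1 = r -> sigma i + w i < sigma i.+1.
    by move=> i_r; subst r; case: gap => [|/=]; lia.
  move: gap_i (prec i i_n); rewrite !delayed /delay_block; try lia.
  by case: ifP; case: ifP; lia.
have := last_end n_pos; rewrite delayed /delay_block; last lia.
by case: ifP; lia.
Qed.

Lemma gap_undelay : (forall i, 1 <= i < n -> sigma i + w i <= sigma i.+1) ->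
  s = n \/ tau s + w s < tau s.+1.
Proof.
move=> prec; case: (eqVneq s n) => [|s_lt_n]; [by left | right].
by have := prec s ltac:(lia); rewrite delayed_in ?delayed_out; lia.
Qed.

Section Activity.
Hypothesis w_pos : forall i, 1 <= i <= n -> 1 <= w i.
Hypothesis tau_prec : forall i, 1 <= i < n -> tau i + w i <= tau i.+1.
Hypothesis tau_tight : tight w tau r s.

Lemma active_delay_other t : t != tau r -> t != tau s + w s ->
  active n w sigma t = active n w tau t.
Proof.
move=> t_r t_s; apply/activeP/activeP => [[i [i_n t_i]]|[i [i_n t_i]]].
- case: (boolP (r <= i <= s)) => i_rs; last by exists i; rewrite -(delayed_out i_n i_rs).
  rewrite delayed_in // in t_i; have := w_pos i_n.
  case: (ltnP t (tau i + w i)) => t_end; first by exists i; split=> //; lia.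
  have i_s : i <> s by move=> i_s; subst i; lia.
  have := tau_tight (i := i) ltac:(lia); have := w_pos (i := i.+1) ltac:(lia).
  by exists i.+1; split; lia.
- case: (boolP (r <= i <= s)) => i_rs; last by exists i; rewrite (delayed_out i_n i_rs).
  have := w_pos i_n.
  case: (ltnP (tau i) t) => t_start; first by exists i; rewrite delayed_in //; lia.
  have i_r : i <> r by move=> i_r; subst i; lia.
  have := tau_tight (i := i.-1) ltac:(lia); rewrite prednK; last lia.
  have := w_pos (i := i.-1) ltac:(lia).
  by exists i.-1; rewrite delayed_in; lia.
Qed.

Lemma active_delay_start : active n w tau (tau r) && ~~ active n w sigma (tau r).
Proof.
have w_r := w_pos (i := r) ltac:(lia).
apply/andP; split; first by apply/activeP; exists r; lia.
apply/activeP => [[i [i_n t_i]]].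
case: (boolP (r <= i <= s)) => i_rs.
  rewrite delayed_in // in t_i.
  by have := start_mono tau_prec (i := r) (j := i) ltac:(lia) ltac:(lia); lia.
rewrite delayed_out // in t_i.
case: (ltnP i r) => i_r.
  by have := completion_le_start tau_prec (i := i) (j := r) ltac:(lia) ltac:(lia); lia.
by have := completion_le_start tau_prec (i := r) (j := i) ltac:(lia) ltac:(lia); lia.
Qed.

Lemma active_delay_end : (s = n \/ tau s + w s < tau s.+1) ->
  active n w sigma (tau s + w s) && ~~ active n w tau (tau s + w s).
Proof.
move=> gap; have w_s := w_pos (i := s) ltac:(lia).
apply/andP; split; first by apply/activeP; exists s; rewrite delayed_in //; lia.
apply/activeP => [[i [i_n t_i]]].
case: (leqP i s) => i_s.
  by have := completion_mono tau_prec (i := i) (j := s) ltac:(lia) s_n; lia.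
have gap_s : tau s + w s < tau s.+1 by case: gap; lia.
by have := start_mono tau_prec (i := s.+1) (j := i) ltac:(lia) ltac:(lia); lia.
Qed.

Variables (J : nat) (e G : nat -> nat) (Pidle Pwork : nat).
Local Notation slot := (slot_cost J e G Pidle Pwork).
Local Notation cost := (carbon_cost n w J e G Pidle Pwork).

Lemma carbon_cost_delay :
  (s = n \/ tau s + w s < tau s.+1) -> tau s + w s < horizon J e ->
  cost sigma + slot (tau r) true + slot (tau s + w s) false
  = cost tau + slot (tau r) false + slot (tau s + w s) true.
Proof.
move=> gap room.
have [act_r nact_r] := andP active_delay_start.
have [act_s nact_s] := andP (active_delay_end gap).
have r_lt_s : tau r < tau s + w s.
  have := completion_mono tau_prec (i := r) (j := s) r_s s_n.
  by have := w_pos (i := r) ltac:(lia); lia.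
have := big_nat_update2 (f := fun t => slot t (active n w tau t))
  (g := fun t => slot t (active n w sigma t)) (p := tau r) _ _ room.
rewrite /= act_r (negbTE nact_r) act_s (negbTE nact_s).
apply; [by rewrite ltn_eqF | lia | by move=> t t_r t_s; rewrite active_delay_other].
Qed.

End Activity.
End BlockDelay.

Lemma optimal_block_anchored n w J e G Pidle Pwork sigma r s :
  wf_instance n w J e -> optimal_schedule n w J e G Pidle Pwork sigma ->
  (forall sigma', optimal_schedule n w J e G Pidle Pwork sigma' ->
     start_sum n sigma <= start_sum n sigma') ->
  1 <= r <= s -> s <= n -> tight w sigma r s ->
  r = 1 \/ sigma r.-1 + w r.-1 < sigma r -> s = n \/ sigma s + w s < sigma s.+1 ->
  in_E J e (sigma r) \/ in_E J e (sigma s + w s).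
Proof.
move=> [w_pos [e0 _]] [valid_sg opt_sg] min_sg r_s s_n tight_sg gap_r gap_s.
case: (classic (in_E J e (sigma r))) => [|a_E]; [by left | right].
apply: NNPP => b_E.
have a_pos : 0 < sigma r by case: (posnP (sigma r)) => // a0; case: a_E; left.
have b_T : sigma s + w s < horizon J e.
  by apply: lt_horizon_of_notin_E => //; apply: (completion_le_horizon valid_sg); lia.
pose adv := advance_block r s sigma.
have sg_adv i : 1 <= i <= n -> sigma i = delay_block r s adv i.
  move=> i_n; apply: delay_advance_block => i_rs.
  by have := start_mono valid_sg.1 (i := r) (j := i) ltac:(lia) ltac:(lia); lia.
have valid_adv := valid_undelay r_s s_n sg_adv valid_sg gap_r.
have valid_del := valid_delay r_s s_n (fun _ _ => erefl) valid_sg gap_s (fun _ => b_T).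
have adv_r : adv r = sigma r - 1 by rewrite /adv /advance_block ifT //; lia.
have adv_s : adv s + w s = sigma s + w s - 1.
  rewrite /adv /advance_block ifT; last lia.
  by have := start_mono valid_sg.1 (i := r) (j := s) r_s s_n; lia.
have room_adv : adv s + w s < horizon J e by rewrite adv_s; lia.
have cost_del := carbon_cost_delay r_s s_n (fun _ _ => erefl) w_pos valid_sg.1 tight_sg
  G Pidle Pwork gap_s b_T.
have cost_adv := carbon_cost_delay r_s s_n sg_adv w_pos valid_adv.1
  (tight_undelay r_s s_n sg_adv tight_sg) G Pidle Pwork
  (gap_undelay r_s s_n sg_adv valid_sg.1) room_adv.
(* The left move flips the slots a - 1 and b - 1, which cost the same as a and b:
   its cost change is the opposite of that of the right move. *)
rewrite adv_r adv_s !slot_cost_pred // in cost_adv.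
have := opt_sg _ valid_adv; have := opt_sg _ valid_del => le_del le_adv.
have opt_adv : optimal_schedule n w J e G Pidle Pwork adv.
  by split=> // sigma' valid'; have := opt_sg _ valid'; lia.
by have := min_sg _ opt_adv; have := start_sum_undelay r_s s_n sg_adv; lia.
Qed.

Theorem mainTheorem3 (n : nat) (w : nat -> nat) (J : nat) (e : nat -> nat)
    (G : nat -> nat) (Pidle Pwork : nat) :
  wf_instance n w J e ->
  (exists sigma, valid_schedule n w J e sigma) ->
  exists sigma, optimal_schedule n w J e G Pidle Pwork sigma /\
    forall u, 1 <= u <= n -> in_E' n w J e u (sigma u + w u).
Proof.
move=> wf feasible.
have [sg0 opt_sg0] := ex_argmin (carbon_cost n w J e G Pidle Pwork) feasible.
have [sg [opt_sg min_sg]] :=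
  ex_argmin (start_sum n) (ex_intro (optimal_schedule n w J e G Pidle Pwork) sg0 opt_sg0).
exists sg; split=> // u u_n.
have [r [s [r_u u_s tight_sg gap_r gap_s]]] := maximal_tight_block opt_sg.1.1 u_n.
have tight_in r' s' : r <= r' -> s' <= s -> tight w sg r' s'.
  by move=> r_r' s'_s i i_rs; apply: tight_sg; lia.
have r_s : 1 <= r <= s by lia.
have s_n : s <= n by lia.
have [a_E|b_E] := optimal_block_anchored wf opt_sg min_sg r_s s_n tight_sg gap_r gap_s.
- left; exists (sg r), r; split=> //; split; [lia | split; [lia | ]].
  by apply: completion_of_tight; [lia | apply: tight_in; lia].
- right; exists (sg s + w s), s; split=> //; split; [lia | split; [lia | ]].
  rewrite (completion_of_tight (r := u) (s := s)); [| lia | apply: tight_in; lia].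
  by rewrite (@big_ltn _ _ _ u s.+1) ?addnA //; lia.
Qed.
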